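(* Consider the disclosure model described in the context, and suppose $\pi(\theta,e)=\tilde\pi(\theta,e,e)=\pi_0(e)-\theta\,(ae+b)$ for some function $\pi_0$ and constants $a,b\in\mathbb{R}$ with $a>0$ (respectively $a<0$). Suppose $f$ is continuously differentiable on the interior of $\Theta$. Suppose further that there exists $\theta_\blacktriangle\in\Theta$ such that: (i) $\underline{\mathbf e}(\theta)=\bar e$ for all $\theta\in[\underline\theta,\theta_\blacktriangle]$ (respectively for all $\theta\in[\theta_\blacktriangle,\bar\theta]$); and (ii) $f$ is nonincreasing on $[\theta_\blacktriangle,\bar\theta]$ (respectively nondecreasing on $[\underline\theta,\theta_\blacktriangle]$). Then full disclosure is the only efficient policy: the Pareto frontier of $\{(\Gamma(d),\Pi(d)):d\in\mathcal{D}\}$ consists of the single point $(\Gamma(d_F),\Pi(d_F))$, where $d_F$ is a full-disclosure policy.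
   Context: Emissions lie in $E=[0,\bar e]$ with $\bar e>0$. The firm's type $\theta\in\Theta=[\underline\theta,\bar\theta]$ is private information with density $f=F'$, which is continuous on $\Theta$. The firm's profit is $\tilde\pi(\theta,e,\tilde e)$ with actual emission $e$ and market-perceived emission $\tilde e$; it is strictly increasing in $e$ and strictly decreasing in $\tilde e$. Standing assumptions: $\tilde\pi$ is continuous on $\Theta\times E\times E$ and $C^2$ on its interior; $\pi(\theta,e):=\tilde\pi(\theta,e,e)$ is strictly concave in $e$; and $\pi(\theta,0)<\pi(\theta,\bar e)$ for all $\theta$. $\underline{\mathbf e}(\theta):=\min\{e\in E:\pi(\theta,e)\ge\pi(\theta,\bar e)\}$ and $\hat{\mathbf e}(\theta):=\arg\max_{e\in E}\pi(\theta,e)$. A disclosure policy is a function $d:E\to E$ (a partition of $E$ into level sets). An emission $e$ is belief-compatible under $d$ if $e\ge e'$ whenever $d(e')=d(e)$; $\tilde E_d$ is the set of such levels. The type-$\theta$ firm chooses $e\in\tilde E_d$ maximizing $\pi(\theta,e)$. $\mathcal{D}$ is the set of policies for which the maximum is attained for every type. For $d\in\mathcal{D}$, $\pi_d(\theta)=\max_{e\in\tilde E_d}\pi(\theta,e)$, and $\gamma_d(\theta)$ is the lowest maximizer. Further, $\Pi(d)=\int_\Theta\pi_d\,dF$ and $\Gamma(d)=\int_\Theta\gamma_d\,dF$. A policy $d\in\mathcal{D}$ is Pareto efficient if there is no $d'\in\mathcal{D}$ with $\Pi(d')\ge\Pi(d)$ and $\Gamma(d')\le\Gamma(d)$, at least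 one strict. A full-disclosure policy is a policy in which every $e\in\hat{\mathbf e}(\Theta)$ is alone in its cell ($d(e')=d(e)$ implies $e'=e$), so each type can attain $\max_E\pi(\theta,\cdot)$. *)

From Stdlib Require Import Reals Lra.
From Coquelicot Require Import Coquelicot.
Open Scope R_scope.

Definition inI (lo hi x : R) : Prop := lo <= x <= hi.

Definition pi_diag (pit : R -> R -> R -> R) (th e : R) : R := pit th e e.

Definition part (i : nat) (g : R -> R -> R -> R) : R -> R -> R -> R :=
  match i with
  | O => fun x y z => Derive (fun t => g t y z) x
  | S O => fun x y z => Derive (fun t => g x t z) y
  | _ => fun x y z => Derive (fun t => g x y t) z
  end.

Definition ex_part (i : nat) (g : R -> R -> R -> R) (x y z : R) : Prop :=
  match i with
  | O => ex_derive (fun t => g t y z) x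
  | S O => ex_derive (fun t => g x t z) y
  | _ => ex_derive (fun t => g x y t) z
  end.

Definition cont3_at (U : R -> R -> R -> Prop) (g : R -> R -> R -> R)
  (x y z : R) : Prop :=
  forall eps, 0 < eps -> exists del, 0 < del /\
    forall x' y' z', U x' y' z' ->
      Rabs (x' - x) < del -> Rabs (y' - y) < del -> Rabs (z' - z) < del ->
      Rabs (g x' y' z' - g x y z) < eps.

Definition C2_on (U : R -> R -> R -> Prop) (g : R -> R -> R -> R) : Prop :=
  forall x y z, U x y z ->
    cont3_at U g x y z /\
    (forall i, (i < 3)%nat -> ex_part i g x y z /\ cont3_at U (part i g) x y z) /\
    (forall i j, (i < 3)%nat -> (j < 3)%nat ->
       ex_part j (part i g) x y z /\ cont3_at U (part j (part i g)) x y z).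

(** Standing assumptions of the model on tilde-pi, Theta = [lo,hi], E = [0,ebar] *)
Definition standing_assumptions (lo hi ebar : R) (pit : R -> R -> R -> R) : Prop :=
  (forall th e e', inI lo hi th -> inI 0 ebar e -> inI 0 ebar e' ->
     cont3_at (fun x y z => inI lo hi x /\ inI 0 ebar y /\ inI 0 ebar z)
              pit th e e') /\
  C2_on (fun x y z => lo < x < hi /\ 0 < y < ebar /\ 0 < z < ebar) pit /\
  (* strictly increasing in actual emission e *)
  (forall th e1 e2 e', inI lo hi th -> inI 0 ebar e1 -> inI 0 ebar e2 ->
     inI 0 ebar e' -> e1 < e2 -> pit th e1 e' < pit th e2 e') /\
  (* strictly decreasing in perceived emission *)
  (forall th e e1 e2, inI lo hi th -> inI 0 ebar e -> inI 0 ebar e1 ->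
     inI 0 ebar e2 -> e1 < e2 -> pit th e e2 < pit th e e1) /\
  (forall th x y t, inI lo hi th -> inI 0 ebar x -> inI 0 ebar y -> x <> y ->
     0 < t < 1 ->
     t * pi_diag pit th x + (1 - t) * pi_diag pit th y
       < pi_diag pit th (t * x + (1 - t) * y)) /\
  (forall th, inI lo hi th -> pi_diag pit th 0 < pi_diag pit th ebar).

Definition density (lo hi : R) (f : R -> R) : Prop :=
  (forall th, inI lo hi th -> 0 <= f th) /\
  (forall th, inI lo hi th -> forall eps, 0 < eps -> exists del, 0 < del /\
     forall th', inI lo hi th' -> Rabs (th' - th) < del ->
       Rabs (f th' - f th) < eps) /\
  RInt f lo hi = 1.

Definition is_elow (ebar : R) (pit : R -> R -> R -> R) (th x : R) : Prop :=
  inI 0 ebar x /\ pi_diag pit th x >= pi_diag pit th ebar /\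
  forall e, inI 0 ebar e -> pi_diag pit th e >= pi_diag pit th ebar -> x <= e.

Definition is_ehat (ebar : R) (pit : R -> R -> R -> R) (th e : R) : Prop :=
  inI 0 ebar e /\ forall e', inI 0 ebar e' -> pi_diag pit th e' <= pi_diag pit th e.

(** a disclosure policy d : E -> E (values outside E are irrelevant) *)
Definition policy (ebar : R) (d : R -> R) : Prop :=
  forall e, inI 0 ebar e -> inI 0 ebar (d e).

Definition belief_compatible (ebar : R) (d : R -> R) (e : R) : Prop :=
  inI 0 ebar e /\ forall e', inI 0 ebar e' -> d e' = d e -> e' <= e.

Definition in_D (lo hi ebar : R) (pit : R -> R -> R -> R) (d : R -> R) : Prop :=
  policy ebar d /\
  forall th, inI lo hi th -> exists e, belief_compatible ebar d e /\
    forall e', belief_compatible ebar d e' -> pi_diag pit th e' <= pi_diag pit th e.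

Definition pi_d (ebar : R) (pit : R -> R -> R -> R) (d : R -> R) (th : R) : R :=
  real (Lub_Rbar (fun v => exists e, belief_compatible ebar d e /\
                                       v = pi_diag pit th e)).

Definition gamma_d (ebar : R) (pit : R -> R -> R -> R) (d : R -> R) (th : R) : R :=
  real (Glb_Rbar (fun e => belief_compatible ebar d e /\
                             pi_diag pit th e = pi_d ebar pit d th)).

Definition Pi (lo hi ebar : R) (pit : R -> R -> R -> R) (f : R -> R) (d : R -> R) : R :=
  RInt (fun th => pi_d ebar pit d th * f th) lo hi.

Definition Gamma (lo hi ebar : R) (pit : R -> R -> R -> R) (f : R -> R) (d : R -> R) : R :=
  RInt (fun th => gamma_d ebar pit d th * f th) lo hi.

Definition pareto_efficient (lo hi ebar : R) (pit : R -> R -> R -> R) (f : R -> R)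
  (d : R -> R) : Prop :=
  in_D lo hi ebar pit d /\
  ~ (exists d', in_D lo hi ebar pit d' /\
       Pi lo hi ebar pit f d' >= Pi lo hi ebar pit f d /\
       Gamma lo hi ebar pit f d' <= Gamma lo hi ebar pit f d /\
       (Pi lo hi ebar pit f d' > Pi lo hi ebar pit f d \/
        Gamma lo hi ebar pit f d' < Gamma lo hi ebar pit f d)).

Definition full_disclosure (lo hi ebar : R) (pit : R -> R -> R -> R) (d : R -> R) : Prop :=
  policy ebar d /\
  forall th e, inI lo hi th -> is_ehat ebar pit th e ->
    forall e', inI 0 ebar e' -> d e' = d e -> e' = e.

(* The value [pi_d] of any policy is an upper envelope of functions of the type that are
   affine with slopes [- (a e + b)]; for [a > 0] the lowest optimal emission [gamma_d] is
   therefore nonincreasing and [a * RInt gamma_d lo c = pi_d lo - pi_d c - b (c - lo)].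
   Full disclosure maximizes [pi_d] pointwise, whence [Pi d <= Pi dF]. Below [thT] every
   policy leads to [ebar], so [pi_d lo = pi_dF lo] and the primitive of
   [gamma_d - gamma_dF] from [lo] is nonnegative; as this difference vanishes below [thT]
   and [f] is nonincreasing above it, the second mean value theorem gives
   [Gamma dF <= Gamma d]. So [dF] weakly dominates every policy, and every efficient policy
   ties with it. The case [a < 0] reduces to [a > 0] through [th |-> - th]. *)

From Stdlib Require Import Reals Lra Classical.
From Coquelicot Require Import Coquelicot.
Open Scope R_scope.

(** * Real analysis *)

Lemma Rle_of_forall_sub_div_succ (x y c : R) :
  (forall n : nat, x - c / (INR n + 1) <= y) -> x <= y.
Proof.
  intros H. apply le_epsilon. intros eps Heps.
  destruct (INR_unbounded (Rabs c / eps)) as [n Hn].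
  specialize (H n). pose proof (pos_INR n). pose proof (Rle_abs c).
  assert (c / (INR n + 1) * (INR n + 1) = c) by (field; lra).
  assert (Rabs c / eps * eps = Rabs c) by (field; lra).
  nra.
Qed.

Lemma increment_defect_telescope (s t d : R) (X m : R -> R) (n : nat) :
  0 <= d -> s + INR n * d <= t ->
  (forall u w, s <= u -> u <= w -> w <= t -> X u - (w - u) * (m w - m u) <= X w) ->
  X s - d * (m (s + INR n * d) - m s) <= X (s + INR n * d).
Proof.
  intros Hd Hn Hdef. induction n as [|n IH].
  - rewrite Rmult_0_l, Rplus_0_r. lra.
  - rewrite S_INR in *.
    assert (Hu : s <= s + INR n * d) by (pose proof (pos_INR n); nra).
    specialize (IH ltac:(lra)).
    specialize (Hdef (s + INR n * d) (s + (INR n + 1) * d) Hu ltac:(lra) Hn).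
    replace (s + (INR n + 1) * d - (s + INR n * d)) with d in Hdef by ring.
    lra.
Qed.

(* A defect quadratic in the step length vanishes when summed along finer and finer grids. *)
Lemma le_of_increment_defect (s t : R) (X m : R -> R) :
  s <= t ->
  (forall u w, s <= u -> u <= w -> w <= t -> X u - (w - u) * (m w - m u) <= X w) ->
  X s <= X t.
Proof.
  intros Hst Hdef. apply (Rle_of_forall_sub_div_succ _ _ ((t - s) * (m t - m s))).
  intros n.
  assert (Hn1 : 0 < INR n + 1) by (pose proof (pos_INR n); lra).
  set (d := (t - s) / (INR n + 1)).
  assert (Hgrid : s + INR (S n) * d = t) by (unfold d; rewrite S_INR; field; lra).
  pose proof (increment_defect_telescope s t d X m (S n)) as H.
  rewrite Hgrid in H.
  replace ((t - s) * (m t - m s) / (INR n + 1)) with (d * (m t - m s)) by (unfold d; field; lra).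
  apply H; [unfold d; apply Rdiv_le_0_compat; lra | lra | exact Hdef].
Qed.

(* Coquelicot's lemmas at [R], stated with [Rminus] and [Rmult] so that they rewrite. *)
Lemma RInt_Rminus (f g : R -> R) (a b : R) : ex_RInt f a b -> ex_RInt g a b ->
  RInt (fun x => f x - g x) a b = RInt f a b - RInt g a b.
Proof. exact (RInt_minus f g a b). Qed.

Lemma RInt_Rmult (f : R -> R) (a b k : R) : ex_RInt f a b ->
  RInt (fun x => k * f x) a b = k * RInt f a b.
Proof. exact (RInt_scal f a b k). Qed.

Lemma RInt_Chasles_R (f : R -> R) (a b c : R) : ex_RInt f a b -> ex_RInt f b c ->
  RInt f a b + RInt f b c = RInt f a c.
Proof. exact (RInt_Chasles f a b c). Qed.

Lemma ex_RInt_Rminus (f g : R -> R) (a b : R) : ex_RInt f a b -> ex_RInt g a b ->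
  ex_RInt (fun x => f x - g x) a b.
Proof. exact (ex_RInt_minus f g a b). Qed.

Lemma ex_RInt_Rmult (f : R -> R) (a b k : R) : ex_RInt f a b ->
  ex_RInt (fun x => k * f x) a b.
Proof. exact (ex_RInt_scal f a b k). Qed.

Lemma ex_RInt_Icc_subset (f : R -> R) (s t u w : R) :
  s <= u -> u <= w -> w <= t -> ex_RInt f s t -> ex_RInt f u w.
Proof.
  intros Hsu Huw Hwt H.
  apply (ex_RInt_Chasles_2 f s); [lra|].
  exact (ex_RInt_Chasles_1 f s w t ltac:(lra) H).
Qed.

Lemma RInt_between_const (g : R -> R) (u w lb ub : R) : u <= w -> ex_RInt g u w ->
  (forall x, u < x < w -> lb <= g x <= ub) ->
  (w - u) * lb <= RInt g u w <= (w - u) * ub.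
Proof.
  intros Huw Hg Hb.
  rewrite <- !(RInt_const (V := R_CompleteNormedModule)).
  split; apply RInt_le; auto; try apply ex_RInt_const; intros x Hx; apply Hb, Hx.
Qed.

Lemma ex_RInt_ext_open (f g : R -> R) (lo hi : R) : lo <= hi ->
  (forall x, lo < x < hi -> f x = g x) -> ex_RInt f lo hi -> ex_RInt g lo hi.
Proof.
  intros Hlh E. apply ex_RInt_ext. rewrite Rmin_left, Rmax_right by lra. exact E.
Qed.

Lemma ex_RInt_continuous_R (F : R -> R) (a b : R) :
  (forall z, continuous F z) -> ex_RInt F a b.
Proof.
  intros HF. apply (ex_RInt_continuous (V := R_CompleteNormedModule)). intros z _. apply HF.
Qed.

(* [RInt h s c - V c] moves by at most [(w - u) (h w - h u)] between [u] and [w],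
   so it and its opposite are both nondecreasing. *)
Lemma RInt_of_increment_sandwich (s t : R) (h V : R -> R) :
  s <= t -> ex_RInt h s t ->
  (forall u w, s <= u -> u <= w -> w <= t -> h u <= h w) ->
  (forall u w, s <= u -> u <= w -> w <= t ->
     (w - u) * h u <= V w - V u <= (w - u) * h w) ->
  RInt h s t = V t - V s.
Proof.
  intros Hst Hh Hmono HV.
  set (H := fun c => RInt h s c - V c).
  assert (Hstep : forall u w, s <= u -> u <= w -> w <= t ->
            Rabs (H w - H u) <= (w - u) * (h w - h u)).
  { intros u w Hsu Huw Hwt.
    assert (Hsplit : RInt h s w = RInt h s u + RInt h u w).
    { symmetry. apply RInt_Chasles_R; apply (ex_RInt_Icc_subset _ s t); lra || auto. }
    destruct (RInt_between_const h u w (h u) (h w) Huw) as [Hlo Hhi].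
    { apply (ex_RInt_Icc_subset _ s t); lra || auto. }
    { intros x Hx. split; apply Hmono; lra. }
    specialize (HV u w Hsu Huw Hwt).
    unfold H. rewrite Hsplit. apply Rabs_le. lra. }
  assert (Hup : H s <= H t).
  { apply (le_of_increment_defect s t H h Hst).
    intros u w Hsu Huw Hwt. specialize (Hstep u w Hsu Huw Hwt).
    apply Rabs_le_between in Hstep. lra. }
  assert (Hdown : - H s <= - H t).
  { apply (le_of_increment_defect s t (fun c => - H c) h Hst).
    intros u w Hsu Huw Hwt. specialize (Hstep u w Hsu Huw Hwt).
    apply Rabs_le_between in Hstep. lra. }
  unfold H in Hup, Hdown. rewrite RInt_point in Hup, Hdown.
  change (@zero R_CompleteNormedModule) with 0 in Hup, Hdown. lra.
Qed.

(* Second mean value theorem, in Abel's summation-by-parts form: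
   [X c = RInt (phi f) s c - f c * RInt phi s c] is nondecreasing. *)
Lemma RInt_mul_nonincreasing_ge0 (s t B : R) (phi f : R -> R) :
  s <= t -> ex_RInt phi s t -> ex_RInt (fun x => phi x * f x) s t ->
  (forall x, s <= x <= t -> Rabs (phi x) <= B) ->
  (forall u w, s <= u -> u <= w -> w <= t -> f w <= f u) ->
  0 <= f t ->
  (forall c, s <= c <= t -> 0 <= RInt phi s c) ->
  0 <= RInt (fun x => phi x * f x) s t.
Proof.
  intros Hst Hphi Hphif HB Hf Hft HPhi.
  set (X := fun c => RInt (fun x => phi x * f x) s c - f c * RInt phi s c).
  assert (Hmono : X s <= X t).
  { apply (le_of_increment_defect s t X (fun x => - B * f x) Hst).
    intros u w Hsu Huw Hwt.
    assert (Hsub : forall g : R -> R, ex_RInt g s t -> ex_RInt g s u /\ ex_RInt g u w).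
    { intros g Hg. split; apply (ex_RInt_Icc_subset _ s t); lra || auto. }
    destruct (Hsub _ Hphi) as [Hphi1 Hphi2].
    destruct (Hsub _ Hphif) as [Hphif1 Hphif2].
    assert (Hfuw : f w <= f u) by (apply Hf; lra).
    assert (Hrest : (w - u) * - (B * (f u - f w))
                    <= RInt (fun x => phi x * f x - f w * phi x) u w).
    { apply (RInt_between_const _ u w _ (B * (f u - f w)) Huw).
      { apply ex_RInt_Rminus; auto. apply ex_RInt_Rmult; auto. }
      intros x Hx.
      assert (f w <= f x <= f u) by (split; apply Hf; lra).
      assert (Hbx : Rabs (phi x * (f x - f w)) <= B * (f u - f w)).
      { rewrite Rabs_mult, (Rabs_right (f x - f w)) by lra.
        pose proof (HB x ltac:(lra)). pose proof (Rabs_pos (phi x)). nra. }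
      apply Rabs_le_between in Hbx. lra. }
    rewrite RInt_Rminus, RInt_Rmult in Hrest; auto;
      [|apply ex_RInt_Rmult; auto].
    assert (Hcross : 0 <= RInt phi s u * (f u - f w))
      by (apply Rmult_le_pos; [apply HPhi|]; lra).
    unfold X.
    rewrite <- (RInt_Chasles_R phi s u w), <- (RInt_Chasles_R _ s u w); auto.
    nra. }
  unfold X in Hmono. rewrite !RInt_point in Hmono.
  change (@zero R_CompleteNormedModule) with 0 in Hmono.
  pose proof (Rmult_le_pos _ _ Hft (HPhi t ltac:(lra))). lra.
Qed.

Lemma RInt_comp_opp_Icc (F : R -> R) (lo hi : R) :
  ex_RInt (fun y => F (- y)) (- hi) (- lo) ->
  RInt (fun y => F (- y)) (- hi) (- lo) = RInt F lo hi.
Proof.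
  intros [l Hl]. rewrite (is_RInt_unique _ _ _ l Hl). symmetry.
  apply is_RInt_unique.
  apply is_RInt_comp_opp, is_RInt_swap, is_RInt_opp in Hl.
  rewrite opp_opp in Hl. revert Hl. apply is_RInt_ext.
  intros x _. rewrite opp_opp, Ropp_involutive. reflexivity.
Qed.

Lemma ex_RInt_uniform_limit (u : nat -> R -> R) (g : R -> R) (a b : R) :
  (forall n, ex_RInt (u n) a b) ->
  (forall eps, 0 < eps -> exists N, forall n x, (N <= n)%nat -> Rabs (u n x - g x) < eps) ->
  ex_RInt g a b.
Proof.
  intros Hu Hcv.
  assert (Hlim : filterlim u eventually (@locally (fct_UniformSpace R R_UniformSpace) g)).
  { intros P [eps Heps]. destruct (Hcv eps (cond_pos eps)) as [N HN].
    exists N. intros n Hn. apply Heps. intros x. exact (HN n x Hn). }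
  destruct (filterlim_RInt u a b eventually _ g (fun n => RInt (u n) a b)
              (fun n => RInt_correct _ _ _ (Hu n)) Hlim) as [l [_ Hl]].
  exists l. exact Hl.
Qed.

(* A nonincreasing [g] is [>= c] exactly to the left of [sup {x | c <= g x}]. *)
Lemma ex_RInt_superlevel_mul (lo hi c : R) (g F : R -> R) : lo <= hi ->
  (forall x y, x <= y -> g y <= g x) -> (forall z, continuous F z) ->
  ex_RInt (fun x => (if Rle_dec c (g x) then 1 else 0) * F x) lo hi.
Proof.
  intros Hlh Hg HF.
  assert (HF_int : forall u w, ex_RInt F u w)
    by (intros u w; apply ex_RInt_continuous_R, HF).
  assert (Hzero : forall u w, u <= w -> (forall x, u < x < w -> g x < c) ->
            ex_RInt (fun x => (if Rle_dec c (g x) then 1 else 0) * F x) u w).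
  { intros u w Huw Hlt. apply (ex_RInt_ext_open (fun _ => 0)); [exact Huw| |apply ex_RInt_const].
    intros x Hx. destruct (Rle_dec c (g x)) as [H|H]; [specialize (Hlt x Hx); lra|ring]. }
  set (S := fun x => lo <= x <= hi /\ c <= g x).
  destruct (classic (exists x, S x)) as [Hne|Hempty].
  2:{ apply Hzero; [exact Hlh|]. intros x Hx. apply Rnot_le_lt. intros Hc.
      apply Hempty. exists x. split; [lra|exact Hc]. }
  destruct (completeness S (ex_intro _ hi (fun x Sx => proj2 (proj1 Sx))) Hne)
    as [sigma [Hub Hlub]].
  destruct Hne as [x0 Sx0].
  assert (Hsigma : lo <= sigma <= hi).
  { split; [apply Rle_trans with x0; [apply Sx0|apply Hub, Sx0]|].
    apply Hlub. intros x Sx. apply Sx. }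
  apply (ex_RInt_Chasles _ lo sigma hi).
  - apply (ex_RInt_ext_open F); [lra| |apply HF_int].
    intros x Hx. destruct (Rle_dec c (g x)) as [H|H]; [ring|exfalso].
    destruct (classic (exists y, S y /\ x < y)) as [[y [[_ Hy] Hxy]]|Hno].
    + apply H. apply Rle_trans with (g y); [exact Hy|apply Hg; lra].
    + assert (sigma <= x); [|lra].
      apply Hlub. intros y Sy. apply Rnot_lt_le. intros Hxy. apply Hno. now exists y.
  - apply Hzero; [lra|]. intros x Hx. apply Rnot_le_lt. intros Hc.
    assert (x <= sigma) by (apply Hub; split; [lra|exact Hc]). lra.
Qed.

Fixpoint staircase (g : R -> R) (m e : R) (N : nat) (x : R) : R :=
  match N with
  | O => m
  | S n => staircase g m e n x + e * (if Rle_dec (m + INR (S n) * e) (g x) then 1 else 0)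
  end.

Lemma staircase_spec (g : R -> R) (m e x : R) (N : nat) : 0 < e -> m <= g x ->
  (m + INR N * e <= g x /\ staircase g m e N x = m + INR N * e) \/
  (g x < m + INR N * e /\ staircase g m e N x <= g x < staircase g m e N x + e).
Proof.
  intros He Hm. induction N as [|N IH].
  - left. simpl. lra.
  - cbn [staircase]. rewrite S_INR. destruct (Rle_dec (m + (INR N + 1) * e) (g x)) as [H|H];
      destruct IH as [[H1 H2]|H1]; rewrite ?H2; first [left; lra | right; lra | exfalso; lra].
Qed.

Lemma staircase_approx (g : R -> R) (m M e x : R) (N : nat) : 0 < e ->
  m <= g x <= M -> M - m < INR N * e -> Rabs (staircase g m e N x - g x) < e.
Proof.
  intros He Hx HN.
  destruct (staircase_spec g m e x N He (proj1 Hx)) as [[H _]|H]; [lra|].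
  apply Rabs_def1; lra.
Qed.

Lemma ex_RInt_staircase_mul (lo hi m e : R) (g F : R -> R) (N : nat) : lo <= hi ->
  (forall x y, x <= y -> g y <= g x) -> (forall z, continuous F z) ->
  ex_RInt (fun x => staircase g m e N x * F x) lo hi.
Proof.
  intros Hlh Hg HF. induction N as [|N IH]; cbn [staircase].
  - apply ex_RInt_Rmult, ex_RInt_continuous_R, HF.
  - apply (ex_RInt_ext_open (fun x => staircase g m e N x * F x
             + e * ((if Rle_dec (m + INR (S N) * e) (g x) then 1 else 0) * F x)));
      [exact Hlh|intros; ring|].
    apply (ex_RInt_plus (V := R_NormedModule)); [exact IH|].
    apply ex_RInt_Rmult, ex_RInt_superlevel_mul; assumption.
Qed.

Lemma ex_RInt_nonincreasing_mul (lo hi m M B : R) (g F : R -> R) : lo <= hi ->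
  (forall x y, x <= y -> g y <= g x) -> (forall x, m <= g x <= M) ->
  (forall z, continuous F z) -> (forall x, Rabs (F x) <= B) ->
  ex_RInt (fun x => g x * F x) lo hi.
Proof.
  intros Hlh Hg Hm HF HB.
  assert (HB0 : 0 <= B) by (eapply Rle_trans; [apply Rabs_pos|apply (HB 0)]).
  set (e := fun n : nat => (M - m + 1) / (INR n + 1)).
  assert (He : forall n, 0 < e n).
  { intros n. unfold e. pose proof (Hm 0). pose proof (pos_INR n).
    apply Rdiv_lt_0_compat; lra. }
  apply (ex_RInt_uniform_limit (fun n x => staircase g m (e n) (S n) x * F x)).
  { intros n. apply ex_RInt_staircase_mul; assumption. }
  intros eps Heps.
  destruct (INR_unbounded ((M - m + 1) * (B + 1) / eps)) as [N HN].
  exists N. intros n x Hn.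
  assert (Hn1 : 0 < INR n + 1) by (pose proof (pos_INR n); lra).
  assert (Hstep : Rabs (staircase g m (e n) (S n) x - g x) < e n).
  { apply (staircase_approx g m M); [apply He|apply Hm|].
    rewrite S_INR. unfold e. field_simplify; lra. }
  assert (Hsmall : e n * (B + 1) <= eps).
  { assert (HNn : INR N <= INR n) by (apply le_INR; exact Hn).
    unfold e. apply Rmult_le_reg_r with ((INR n + 1) / eps); [apply Rdiv_lt_0_compat; lra|].
    replace ((M - m + 1) / (INR n + 1) * (B + 1) * ((INR n + 1) / eps))
      with ((M - m + 1) * (B + 1) / eps) by (field; lra).
    replace (eps * ((INR n + 1) / eps)) with (INR n + 1) by (field; lra). lra. }
  rewrite <- Rmult_minus_distr_r, Rabs_mult.
  apply Rle_lt_trans with (e n * B).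
  - apply Rmult_le_compat; [apply Rabs_pos|apply Rabs_pos|lra|apply HB].
  - pose proof (He n). nra.
Qed.

(** * Functions continuous on a closed interval *)

Definition cont_on_Icc (F : R -> R) (lo hi : R) : Prop :=
  forall x, inI lo hi x -> forall eps, 0 < eps -> exists del, 0 < del /\
    forall y, inI lo hi y -> Rabs (y - x) < del -> Rabs (F y - F x) < eps.

Lemma cont_on_Icc_const (c lo hi : R) : cont_on_Icc (fun _ => c) lo hi.
Proof.
  intros x _ eps Heps. exists 1. split; [lra|].
  intros y _ _. rewrite Rminus_diag, Rabs_R0. exact Heps.
Qed.

Lemma inI_opp (lo hi th : R) : inI (- hi) (- lo) (- th) <-> inI lo hi th.
Proof. unfold inI. lra. Qed.

Lemma cont_on_Icc_comp_opp (F : R -> R) (lo hi : R) :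
  cont_on_Icc F lo hi -> cont_on_Icc (fun x => F (- x)) (- hi) (- lo).
Proof.
  intros HF x Hx eps Heps.
  assert (Hx' : inI lo hi (- x)) by (apply inI_opp; rewrite Ropp_involutive; exact Hx).
  destruct (HF (- x) Hx' eps Heps) as [del [Hdel Hclose]].
  exists del. split; [exact Hdel|]. intros y Hy Hyx. apply Hclose.
  - apply (inI_opp lo hi). rewrite Ropp_involutive. exact Hy.
  - rewrite <- Rabs_Ropp. replace (- (- y - - x)) with (y - x) by ring. exact Hyx.
Qed.

(* Composing with [clamp] extends a function continuous on [[lo, hi]] to one continuous
   on all of [R], where Coquelicot's existence theorems for integrals apply. *)
Definition clamp (lo hi x : R) : R := Rmax lo (Rmin hi x).

Lemma clamp_Icc (lo hi x : R) : lo <= hi -> inI lo hi (clamp lo hi x).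
Proof. intros H; unfold inI, clamp, Rmax, Rmin; repeat destruct Rle_dec; lra. Qed.

Lemma clamp_id (lo hi x : R) : inI lo hi x -> clamp lo hi x = x.
Proof. intros H; unfold inI, clamp, Rmax, Rmin in *; repeat destruct Rle_dec; lra. Qed.

Lemma clamp_le (lo hi x y : R) : lo <= hi -> x <= y -> clamp lo hi x <= clamp lo hi y.
Proof. intros H H'; unfold clamp, Rmax, Rmin; repeat destruct Rle_dec; lra. Qed.

Lemma clamp_dist (lo hi x y : R) : lo <= hi ->
  Rabs (clamp lo hi x - clamp lo hi y) <= Rabs (x - y).
Proof. intros H; unfold clamp, Rmax, Rmin; repeat destruct Rle_dec; split_Rabs; lra. Qed.

Lemma continuous_comp_clamp (F : R -> R) (lo hi : R) : lo <= hi -> cont_on_Icc F lo hi ->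
  forall z, continuous (fun x => F (clamp lo hi x)) z.
Proof.
  intros Hlh HF z. apply continuity_pt_filterlim. intros eps Heps.
  destruct (HF (clamp lo hi z) (clamp_Icc lo hi z Hlh) eps Heps) as [del [Hdel Hy]].
  exists del. split; [exact Hdel|]. intros x [_ Hx]. simpl in *. unfold R_dist in *.
  apply Hy; [apply clamp_Icc; exact Hlh|].
  eapply Rle_lt_trans; [apply clamp_dist; exact Hlh | exact Hx].
Qed.

Lemma ex_RInt_of_clamp (F : R -> R) (lo hi : R) : lo <= hi ->
  ex_RInt (fun x => F (clamp lo hi x)) lo hi -> ex_RInt F lo hi.
Proof.
  intros Hlh. apply ex_RInt_ext_open; [exact Hlh|].
  intros x Hx. rewrite clamp_id; [reflexivity|unfold inI; lra].
Qed.

Lemma cont_on_Icc_bounded (F : R -> R) (lo hi : R) : lo <= hi -> cont_on_Icc F lo hi ->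
  exists B, forall x, Rabs (F (clamp lo hi x)) <= B.
Proof.
  intros Hlh HF.
  assert (Hint : ex_RInt (fun x => F (clamp lo hi x)) lo hi)
    by (apply ex_RInt_continuous_R, continuous_comp_clamp; assumption).
  destruct (ex_RInt_ub _ lo hi Hint) as [B HB].
  exists B. intros x.
  pose proof (clamp_Icc lo hi x Hlh) as Hx.
  rewrite <- (clamp_id lo hi (clamp lo hi x) Hx).
  apply HB. rewrite Rmin_left, Rmax_right by lra. exact Hx.
Qed.

(** * Disclosure policies *)

(* [gamma_d ebar pit d th] is [real (Glb_Rbar (maximizer ebar pit d th))] by conversion. *)
Definition maximizer (ebar : R) (pit : R -> R -> R -> R) (d : R -> R) (th e : R) : Prop :=
  belief_compatible ebar d e /\ pi_diag pit th e = pi_d ebar pit d th.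

Section Policy.

Variables (lo hi ebar : R) (pit : R -> R -> R -> R).

Lemma belief_compatible_top (d : R -> R) : 0 <= ebar -> belief_compatible ebar d ebar.
Proof. intros He. split; [unfold inI; lra|]. intros e' [_ He'] _. exact He'. Qed.

Lemma pi_d_eq_of_max (d : R -> R) (th e : R) : belief_compatible ebar d e ->
  (forall e', belief_compatible ebar d e' -> pi_diag pit th e' <= pi_diag pit th e) ->
  pi_d ebar pit d th = pi_diag pit th e.
Proof.
  intros He Hmax. unfold pi_d.
  rewrite (is_lub_Rbar_unique _ (pi_diag pit th e)); [reflexivity|split].
  - intros v [e' [He' ->]]. apply Hmax, He'.
  - intros u Hu. apply Hu. exists e. split; [exact He|reflexivity].
Qed.

Section InD.

Variables (d : R -> R) (th : R).
Hypotheses (Hd : in_D lo hi ebar pit d) (Hth : inI lo hi th).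

Lemma exists_maximizer : exists e, maximizer ebar pit d th e.
Proof.
  destruct (proj2 Hd th Hth) as [e [He Hmax]].
  exists e. split; [exact He|]. symmetry. apply pi_d_eq_of_max; assumption.
Qed.

Lemma pi_d_ge (e : R) : belief_compatible ebar d e -> pi_diag pit th e <= pi_d ebar pit d th.
Proof.
  intros He. destruct (proj2 Hd th Hth) as [e' [He' Hmax]].
  rewrite (pi_d_eq_of_max d th e' He' Hmax). apply Hmax, He.
Qed.

Lemma gamma_d_glb :
  (forall e, maximizer ebar pit d th e -> gamma_d ebar pit d th <= e) /\
  (forall y, (forall e, maximizer ebar pit d th e -> y <= e) -> y <= gamma_d ebar pit d th).
Proof.
  destruct exists_maximizer as [e0 He0].
  destruct (Glb_Rbar_correct (maximizer ebar pit d th)) as [Hlb Hglb].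
  unfold gamma_d. fold (maximizer ebar pit d th).
  destruct (Glb_Rbar (maximizer ebar pit d th)) as [r| |]; simpl in *.
  - split; [exact Hlb|]. intros y Hy. exact (Hglb y Hy).
  - exact (False_ind _ (Hlb e0 He0)).
  - exfalso. apply (Hglb 0). intros e [[He _] _]. apply He.
Qed.

Lemma gamma_d_Icc : inI 0 ebar (gamma_d ebar pit d th).
Proof.
  destruct gamma_d_glb as [Hlb Hglb]. destruct exists_maximizer as [e0 He0].
  split.
  - apply Hglb. intros e [[He _] _]. apply He.
  - apply Rle_trans with e0; [apply Hlb, He0|apply He0].
Qed.

Lemma pi_d_gamma_d_of_elow_top : 0 <= ebar -> is_elow ebar pit th ebar ->
  pi_d ebar pit d th = pi_diag pit th ebar /\ gamma_d ebar pit d th = ebar.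
Proof.
  intros Hebar [_ [_ Hmin]].
  assert (Hmax_top : forall e, maximizer ebar pit d th e -> e = ebar).
  { intros e [He Hpi]. pose proof (pi_d_ge ebar (belief_compatible_top d Hebar)).
    pose proof (Hmin e (proj1 He) ltac:(lra)). destruct He as [[_ ?] _]. lra. }
  destruct exists_maximizer as [e He]. pose proof (Hmax_top e He) as Heq. subst e.
  split; [symmetry; apply He|].
  destruct gamma_d_glb as [Hlb Hglb]. apply Rle_antisym; [apply Hlb, He|].
  apply Hglb. intros e' He'. rewrite (Hmax_top e' He'). lra.
Qed.

End InD.

Lemma exists_ehat (th : R) : 0 <= ebar -> cont_on_Icc (pi_diag pit th) 0 ebar ->
  exists e, is_ehat ebar pit th e.
Proof.
  intros Hebar Hc.
  destruct (continuity_ab_maj (fun e => pi_diag pit th (clamp 0 ebar e)) 0 ebar Hebar)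
    as [e [Hmax He]].
  { intros c _. apply continuity_pt_filterlim, continuous_comp_clamp; assumption. }
  exists e. split; [exact He|]. intros e' He'.
  specialize (Hmax e' He'). rewrite !clamp_id in Hmax; assumption.
Qed.

Section FullDisclosure.

Variable dF : R -> R.
Hypothesis HdF : full_disclosure lo hi ebar pit dF.

Lemma ehat_belief_compatible (th e : R) : inI lo hi th -> is_ehat ebar pit th e ->
  belief_compatible ebar dF e.
Proof.
  intros Hth He. split; [apply He|].
  intros e' He' Hcell. rewrite (proj2 HdF th e Hth He e' He' Hcell). lra.
Qed.

Lemma pi_d_full_disclosure (th e : R) : inI lo hi th -> is_ehat ebar pit th e ->
  pi_d ebar pit dF th = pi_diag pit th e.
Proof.
  intros Hth He. apply pi_d_eq_of_max; [apply (ehat_belief_compatible th); assumption|].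
  intros e' [He' _]. apply He, He'.
Qed.

Hypothesis Hehat : forall th, inI lo hi th -> exists e, is_ehat ebar pit th e.

Lemma full_disclosure_in_D : in_D lo hi ebar pit dF.
Proof.
  split; [apply HdF|]. intros th Hth. destruct (Hehat th Hth) as [e He].
  exists e. split; [apply (ehat_belief_compatible th); assumption|].
  intros e' [He' _]. apply He, He'.
Qed.

Lemma pi_d_le_full_disclosure (d : R -> R) (th : R) : in_D lo hi ebar pit d -> inI lo hi th ->
  pi_d ebar pit d th <= pi_d ebar pit dF th.
Proof.
  intros Hd Hth. destruct (Hehat th Hth) as [eh Heh].
  destruct (exists_maximizer d th Hd Hth) as [e [[He _] <-]].
  rewrite (pi_d_full_disclosure th eh Hth Heh). apply Heh, He.
Qed.

End FullDisclosure.

End Policy.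

Lemma standing_assumptions_cont_on_Icc (lo hi ebar : R) (pit : R -> R -> R -> R) :
  standing_assumptions lo hi ebar pit ->
  forall th, inI lo hi th -> cont_on_Icc (pi_diag pit th) 0 ebar.
Proof.
  intros [Hc _] th Hth e He eps Heps.
  destruct (Hc th e e Hth He He eps Heps) as [del [Hdel Hclose]].
  exists del. split; [exact Hdel|]. intros e' He' Hee'. apply Hclose; try assumption.
  - repeat split; assumption || apply Hth || apply He'.
  - rewrite Rminus_diag, Rabs_R0. exact Hdel.
Qed.

(** * Affine profits *)

Section AffineProfit.

Variables (lo hi ebar : R) (pit : R -> R -> R -> R) (pi0 : R -> R) (a b : R).
Hypothesis Hpi : forall th e, inI lo hi th -> inI 0 ebar e ->
  pi_diag pit th e = pi0 e - th * (a * e + b).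

Variable d : R -> R.
Hypothesis Hd : in_D lo hi ebar pit d.

Let V := pi_d ebar pit d.
Let g := gamma_d ebar pit d.

Lemma pi_d_mimic (s t e : R) : inI lo hi s -> inI lo hi t -> maximizer ebar pit d t e ->
  V t + (t - s) * (a * e + b) <= V s.
Proof.
  intros Hs Ht [He Hmax]. unfold V. rewrite <- Hmax.
  pose proof (pi_d_ge lo hi ebar pit d s Hd Hs e He).
  rewrite !Hpi in * by (apply He || assumption). lra.
Qed.

Lemma pi_d_lipschitz (s t : R) : inI lo hi s -> inI lo hi t ->
  Rabs (V t - V s) <= (Rabs a * ebar + Rabs b) * Rabs (t - s).
Proof.
  intros Hs Ht.
  assert (Hslope : forall e, inI 0 ebar e ->
            Rabs ((s - t) * (a * e + b)) <= (Rabs a * ebar + Rabs b) * Rabs (t - s)).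
  { intros e He. rewrite Rabs_mult, Rabs_minus_sym, Rmult_comm.
    apply Rmult_le_compat_r; [apply Rabs_pos|].
    eapply Rle_trans; [apply Rabs_triang|].
    rewrite Rabs_mult, (Rabs_right e) by (destruct He; lra).
    pose proof (Rabs_pos a). destruct He. nra. }
  destruct (exists_maximizer lo hi ebar pit d t Hd Ht) as [et Het].
  destruct (exists_maximizer lo hi ebar pit d s Hd Hs) as [es Hes].
  pose proof (pi_d_mimic s t et Hs Ht Het). pose proof (pi_d_mimic t s es Ht Hs Hes).
  pose proof (Hslope et (proj1 (proj1 Het))) as Ht'.
  pose proof (Hslope es (proj1 (proj1 Hes))) as Hs'.
  apply Rabs_le_between in Ht', Hs'. apply Rabs_le. lra.
Qed.

Lemma pi_d_cont_on_Icc : cont_on_Icc V lo hi.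
Proof.
  intros x Hx eps Heps. set (K := Rabs a * ebar + Rabs b + 1).
  assert (HK : 0 < K).
  { unfold K. pose proof (Rabs_pos a). pose proof (Rabs_pos b).
    destruct (exists_maximizer lo hi ebar pit d x Hd Hx) as [e [[[He0 He1] _] _]]. nra. }
  exists (eps / K). split; [apply Rdiv_lt_0_compat; assumption|].
  intros y Hy Hyx. eapply Rle_lt_trans; [apply pi_d_lipschitz; assumption|].
  apply Rle_lt_trans with (K * Rabs (y - x)).
  - apply Rmult_le_compat_r; [apply Rabs_pos|unfold K; lra].
  - apply (Rmult_lt_compat_l K) in Hyx; [|exact HK].
    replace (K * (eps / K)) with eps in Hyx by (field; lra). exact Hyx.
Qed.

Lemma ex_RInt_pi_d_mul (F : R -> R) : lo <= hi -> cont_on_Icc F lo hi ->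
  ex_RInt (fun th => V th * F th) lo hi.
Proof.
  intros Hlh HF. apply ex_RInt_of_clamp; [exact Hlh|].
  apply ex_RInt_continuous_R. intros z.
  apply (continuous_mult (fun x => V (clamp lo hi x)) (fun x => F (clamp lo hi x)));
    apply continuous_comp_clamp; [exact Hlh|apply pi_d_cont_on_Icc|exact Hlh|exact HF].
Qed.

Hypothesis Ha : 0 < a.

(* Envelope theorem: [V] is the upper envelope of the affine functions
   [th |-> pi0 e - th * (a * e + b)] of the type. *)
Lemma pi_d_increment_sandwich (s t : R) : inI lo hi s -> inI lo hi t -> s <= t ->
  (t - s) * (- a * g s - b) <= V t - V s <= (t - s) * (- a * g t - b).
Proof.
  intros Hs Ht Hst. split.
  - destruct (Req_dec s t) as [<-|Hneq]; [lra|].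
    destruct (gamma_d_glb lo hi ebar pit d s Hd Hs) as [_ Hglb].
    assert (Hta : 0 < (t - s) * a) by (apply Rmult_lt_0_compat; lra).
    set (q := ((V s - V t) / (t - s) - b) / a).
    assert (Hq : (t - s) * (a * q + b) = V s - V t) by (unfold q; field; lra).
    assert (Hqg : q <= g s).
    { apply Hglb. intros e He. pose proof (pi_d_mimic t s e Ht Hs He). nra. }
    nra.
  - destruct (exists_maximizer lo hi ebar pit d t Hd Ht) as [e He].
    destruct (gamma_d_glb lo hi ebar pit d t Hd Ht) as [Hlb _].
    pose proof (Hlb e He). pose proof (pi_d_mimic s t e Hs Ht He). unfold g, V in *.
    assert (0 <= (t - s) * (a * (e - gamma_d ebar pit d t)))
      by (apply Rmult_le_pos; [|apply Rmult_le_pos]; lra).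
    lra.
Qed.

Lemma gamma_d_nonincreasing (s t : R) : inI lo hi s -> inI lo hi t -> s <= t -> g t <= g s.
Proof.
  intros Hs Ht Hst. destruct (Req_dec s t) as [<-|Hneq]; [lra|].
  destruct (pi_d_increment_sandwich s t Hs Ht Hst) as [H1 H2].
  assert (H : (t - s) * (a * g t) <= (t - s) * (a * g s)) by lra.
  apply Rmult_le_reg_l in H; [|lra]. apply Rmult_le_reg_l in H; lra.
Qed.

Lemma ex_RInt_gamma_d_mul (F : R -> R) : lo <= hi -> cont_on_Icc F lo hi ->
  ex_RInt (fun th => g th * F th) lo hi.
Proof.
  intros Hlh HF. apply ex_RInt_of_clamp; [exact Hlh|].
  destruct (cont_on_Icc_bounded F lo hi Hlh HF) as [B HB].
  apply (ex_RInt_nonincreasing_mul lo hi 0 ebar B (fun x => g (clamp lo hi x))); try assumption.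
  - intros x y Hxy.
    apply gamma_d_nonincreasing; try apply clamp_Icc; try apply clamp_le; assumption.
  - intros x. apply (gamma_d_Icc lo hi ebar pit d); [exact Hd|apply clamp_Icc, Hlh].
  - apply continuous_comp_clamp; assumption.
Qed.

Lemma ex_RInt_gamma_d : lo <= hi -> ex_RInt g lo hi.
Proof.
  intros Hlh. apply (ex_RInt_ext_open (fun th => g th * 1)); [exact Hlh|intros; ring|].
  apply ex_RInt_gamma_d_mul; [exact Hlh|apply cont_on_Icc_const].
Qed.

Lemma RInt_gamma_d (c : R) : inI lo hi c ->
  a * RInt g lo c = V lo - V c - b * (c - lo).
Proof.
  intros Hc.
  assert (Hg : ex_RInt g lo c)
    by (apply (ex_RInt_Icc_subset _ lo hi); try apply ex_RInt_gamma_d; destruct Hc; lra).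
  assert (Hlo : inI lo hi lo) by (destruct Hc; split; lra).
  assert (Hsl : RInt (fun th => - a * g th - b) lo c = V c - V lo).
  { apply RInt_of_increment_sandwich.
    - apply Hc.
    - apply ex_RInt_Rminus; [apply ex_RInt_Rmult, Hg|apply ex_RInt_const].
    - intros u w Hu Huw Hw. pose proof (gamma_d_nonincreasing u w). unfold inI in *. nra.
    - intros u w Hu Huw Hw. apply pi_d_increment_sandwich; unfold inI in *; lra. }
  rewrite RInt_Rminus, RInt_Rmult, RInt_const in Hsl;
    [|exact Hg|apply ex_RInt_Rmult, Hg|apply ex_RInt_const].
  change (scal (c - lo) b) with ((c - lo) * b) in Hsl. lra.
Qed.

End AffineProfit.

(** * Dominance of full disclosure *)

Definition dominant (lo hi ebar : R) (pit : R -> R -> R -> R) (f dF : R -> R) : Prop :=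
  in_D lo hi ebar pit dF /\
  forall d, in_D lo hi ebar pit d ->
    Pi lo hi ebar pit f d <= Pi lo hi ebar pit f dF /\
    Gamma lo hi ebar pit f dF <= Gamma lo hi ebar pit f d.

Lemma pareto_efficient_of_dominant (lo hi ebar : R) (pit : R -> R -> R -> R) (f dF : R -> R) :
  dominant lo hi ebar pit f dF ->
  pareto_efficient lo hi ebar pit f dF /\
  (forall d, pareto_efficient lo hi ebar pit f d ->
     Gamma lo hi ebar pit f d = Gamma lo hi ebar pit f dF /\
     Pi lo hi ebar pit f d = Pi lo hi ebar pit f dF).
Proof.
  intros [HdF Hdom]. split.
  - split; [exact HdF|]. intros [d [Hd [HPi [HGamma Hstrict]]]].
    destruct (Hdom d Hd). lra.
  - intros d [Hd Hundominated]. destruct (Hdom d Hd) as [HPi HGamma].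
    split; apply Rle_antisym; try assumption; apply Rnot_lt_le; intros Hlt;
      apply Hundominated; exists dF; (split; [exact HdF|split; [lra|split; [lra|]]]);
      [right|left]; lra.
Qed.

Section Dominance.

Variables (lo hi ebar : R) (pit : R -> R -> R -> R) (f pi0 : R -> R) (a b thT : R).
Variable dF : R -> R.
Hypotheses (Hlh : lo <= hi) (Hebar : 0 <= ebar)
  (Hcont : forall th, inI lo hi th -> cont_on_Icc (pi_diag pit th) 0 ebar)
  (Hf0 : forall th, inI lo hi th -> 0 <= f th) (Hfc : cont_on_Icc f lo hi)
  (Hpi : forall th e, inI lo hi th -> inI 0 ebar e ->
     pi_diag pit th e = pi0 e - th * (a * e + b))
  (Ha : 0 < a) (HthT : inI lo hi thT)
  (Hlow : forall th, lo <= th <= thT -> is_elow ebar pit th ebar)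
  (Hfm : forall x y, thT <= x -> x <= y -> y <= hi -> f y <= f x)
  (HdF : full_disclosure lo hi ebar pit dF).

Let Hehat (th : R) (Hth : inI lo hi th) : exists e, is_ehat ebar pit th e :=
  exists_ehat ebar pit th Hebar (Hcont th Hth).

Let HdF_D : in_D lo hi ebar pit dF := full_disclosure_in_D lo hi ebar pit dF HdF Hehat.

Lemma Pi_le_full_disclosure (d : R -> R) : in_D lo hi ebar pit d ->
  Pi lo hi ebar pit f d <= Pi lo hi ebar pit f dF.
Proof.
  intros Hd. apply RInt_le; try apply (ex_RInt_pi_d_mul lo hi ebar pit pi0 a b); try assumption.
  intros th Hth. assert (Hth' : inI lo hi th) by (split; lra).
  apply Rmult_le_compat_r; [apply Hf0, Hth'|].
  apply (pi_d_le_full_disclosure lo hi ebar pit dF); assumption.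
Qed.

Lemma RInt_gamma_d_full_disclosure_le (d : R -> R) (c : R) : in_D lo hi ebar pit d ->
  inI lo hi c -> RInt (gamma_d ebar pit dF) lo c <= RInt (gamma_d ebar pit d) lo c.
Proof.
  intros Hd Hc.
  assert (Hlo : inI lo hi lo) by (split; lra).
  pose proof (RInt_gamma_d lo hi ebar pit pi0 a b Hpi d Hd Ha c Hc) as Hd_int.
  pose proof (RInt_gamma_d lo hi ebar pit pi0 a b Hpi dF HdF_D Ha c Hc) as HdF_int.
  assert (Hlow_lo : is_elow ebar pit lo ebar) by (apply Hlow; destruct HthT; lra).
  destruct (pi_d_gamma_d_of_elow_top lo hi ebar pit d lo Hd Hlo Hebar Hlow_lo) as [Hd_lo _].
  destruct (pi_d_gamma_d_of_elow_top lo hi ebar pit dF lo HdF_D Hlo Hebar Hlow_lo) as [HdF_lo _].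
  pose proof (pi_d_le_full_disclosure lo hi ebar pit dF HdF Hehat d c Hd Hc).
  apply (Rmult_le_reg_l a); [exact Ha|]. lra.
Qed.

Lemma gamma_d_below_thT (d : R -> R) (th : R) : in_D lo hi ebar pit d -> lo <= th <= thT ->
  gamma_d ebar pit d th = ebar.
Proof.
  intros Hd Hth.
  apply (pi_d_gamma_d_of_elow_top lo hi ebar pit d th Hd); [|exact Hebar|apply Hlow, Hth].
  destruct HthT. split; lra.
Qed.

Lemma ex_RInt_gamma_d_lo (d : R -> R) (c : R) : in_D lo hi ebar pit d -> inI lo hi c ->
  ex_RInt (gamma_d ebar pit d) lo c.
Proof.
  intros Hd Hc. apply (ex_RInt_Icc_subset _ lo hi); try (destruct Hc; lra).
  apply (ex_RInt_gamma_d lo hi ebar pit pi0 a b); assumption.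
Qed.

(* Summation by parts against the weight [f (Rmax th thT)], nonincreasing on all of
   [lo, hi]; freezing [f] below [thT] is harmless since both policies give [ebar] there. *)
Lemma Gamma_full_disclosure_le (d : R -> R) : in_D lo hi ebar pit d ->
  Gamma lo hi ebar pit f dF <= Gamma lo hi ebar pit f d.
Proof.
  intros Hd.
  set (phi := fun th => gamma_d ebar pit d th - gamma_d ebar pit dF th).
  set (fT := fun th => f (Rmax th thT)).
  assert (HphifT : forall th, lo < th < hi ->
            gamma_d ebar pit d th * f th - gamma_d ebar pit dF th * f th = phi th * fT th).
  { intros th Hth. unfold phi, fT. destruct (Rle_or_lt thT th) as [H|H].
    - rewrite Rmax_left by exact H. ring.
    - rewrite !gamma_d_below_thT by (assumption || lra). ring. }
  assert (Hint : forall dd, in_D lo hi ebar pit dd ->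
            ex_RInt (fun th => gamma_d ebar pit dd th * f th) lo hi)
    by (intros dd Hdd; apply (ex_RInt_gamma_d_mul lo hi ebar pit pi0 a b); assumption).
  assert (Hsplit : Gamma lo hi ebar pit f d - Gamma lo hi ebar pit f dF
                   = RInt (fun th => phi th * fT th) lo hi).
  { unfold Gamma. rewrite <- RInt_Rminus by (apply Hint; assumption).
    apply RInt_ext. rewrite Rmin_left, Rmax_right by exact Hlh. exact HphifT. }
  assert (Hhi : inI lo hi hi) by (split; lra).
  enough (0 <= RInt (fun th => phi th * fT th) lo hi) by lra.
  apply (RInt_mul_nonincreasing_ge0 lo hi ebar); [exact Hlh| | | | | |].
  - apply ex_RInt_Rminus; apply ex_RInt_gamma_d_lo; assumption.
  - apply (ex_RInt_ext_open _ _ lo hi Hlh HphifT), ex_RInt_Rminus; apply Hint; assumption.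
  - intros th Hth.
    pose proof (gamma_d_Icc lo hi ebar pit d th Hd Hth).
    pose proof (gamma_d_Icc lo hi ebar pit dF th HdF_D Hth).
    unfold phi, inI in *. apply Rabs_le. lra.
  - intros u w Hu Huw Hw. unfold fT. apply Hfm.
    + apply Rmax_r.
    + apply Rle_max_compat_r, Huw.
    + apply Rmax_lub; [exact Hw|apply HthT].
  - unfold fT. rewrite Rmax_left by apply HthT. apply Hf0, Hhi.
  - intros c Hc. unfold phi. rewrite RInt_Rminus by (apply ex_RInt_gamma_d_lo; assumption).
    pose proof (RInt_gamma_d_full_disclosure_le d c Hd Hc). lra.
Qed.

Lemma full_disclosure_dominant : dominant lo hi ebar pit f dF.
Proof.
  split; [exact HdF_D|]. intros d Hd.
  split; [apply Pi_le_full_disclosure|apply Gamma_full_disclosure_le]; exact Hd.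
Qed.

End Dominance.

(** * Reflection of the type space *)

Definition reflect_types (pit : R -> R -> R -> R) : R -> R -> R -> R :=
  fun th => pit (- th).

Section Reflection.

Variables (lo hi ebar : R) (pit : R -> R -> R -> R) (f : R -> R).

Let pitR := reflect_types pit.
Let fR := fun th => f (- th).

Lemma in_D_reflect_types (d : R -> R) : in_D (- hi) (- lo) ebar pitR d <-> in_D lo hi ebar pit d.
Proof.
  split; intros [Hd Hmax]; split; try exact Hd; intros th Hth.
  - destruct (Hmax (- th) (proj2 (inI_opp lo hi th) Hth)) as [e He]. exists e.
    unfold pitR, reflect_types, pi_diag in He. rewrite Ropp_involutive in He. exact He.
  - apply Hmax, inI_opp. rewrite Ropp_involutive. exact Hth.
Qed.

Lemma full_disclosure_reflect_types (dF : R -> R) :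
  full_disclosure lo hi ebar pit dF -> full_disclosure (- hi) (- lo) ebar pitR dF.
Proof.
  intros [Hd HdF]. split; [exact Hd|]. intros th e Hth. apply HdF.
  apply inI_opp. rewrite Ropp_involutive. exact Hth.
Qed.

Lemma dominant_of_reflect_types (dF : R -> R) :
  (forall d, in_D lo hi ebar pit d ->
     ex_RInt (fun th => pi_d ebar pitR d th * fR th) (- hi) (- lo) /\
     ex_RInt (fun th => gamma_d ebar pitR d th * fR th) (- hi) (- lo)) ->
  dominant (- hi) (- lo) ebar pitR fR dF -> dominant lo hi ebar pit f dF.
Proof.
  intros Hint [HdF Hdom]. apply in_D_reflect_types in HdF.
  split; [exact HdF|]. intros d Hd.
  destruct (Hdom d (proj2 (in_D_reflect_types d) Hd)) as [HPi HGamma].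
  unfold Pi, Gamma in *.
  destruct (Hint d Hd) as [HPi_d HGamma_d]. destruct (Hint dF HdF) as [HPi_dF HGamma_dF].
  rewrite (RInt_comp_opp_Icc (fun th => pi_d ebar pit d th * f th)),
    (RInt_comp_opp_Icc (fun th => pi_d ebar pit dF th * f th)) in HPi by assumption.
  rewrite (RInt_comp_opp_Icc (fun th => gamma_d ebar pit d th * f th)),
    (RInt_comp_opp_Icc (fun th => gamma_d ebar pit dF th * f th)) in HGamma by assumption.
  split; assumption.
Qed.

End Reflection.

Lemma full_disclosure_dominant_neg (lo hi ebar : R) (pit : R -> R -> R -> R) (f pi0 : R -> R)
  (a b thT : R) (dF : R -> R) :
  lo <= hi -> 0 <= ebar ->
  (forall th, inI lo hi th -> cont_on_Icc (pi_diag pit th) 0 ebar) ->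
  (forall th, inI lo hi th -> 0 <= f th) -> cont_on_Icc f lo hi ->
  (forall th e, inI lo hi th -> inI 0 ebar e -> pi_diag pit th e = pi0 e - th * (a * e + b)) ->
  a < 0 -> inI lo hi thT ->
  (forall th, thT <= th <= hi -> is_elow ebar pit th ebar) ->
  (forall x y, lo <= x -> x <= y -> y <= thT -> f x <= f y) ->
  full_disclosure lo hi ebar pit dF ->
  dominant lo hi ebar pit f dF.
Proof.
  intros Hlh Hebar Hcont Hf0 Hfc Hpi Ha HthT Hlow Hfm HdF.
  assert (Hopp : forall th, inI (- hi) (- lo) th -> inI lo hi (- th))
    by (intros th Hth; apply inI_opp; rewrite Ropp_involutive; exact Hth).
  assert (HcontR : forall th, inI (- hi) (- lo) th ->
            cont_on_Icc (pi_diag (reflect_types pit) th) 0 ebar)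
    by (intros th Hth; apply Hcont, Hopp, Hth).
  assert (Hf0R : forall th, inI (- hi) (- lo) th -> 0 <= f (- th))
    by (intros th Hth; apply Hf0, Hopp, Hth).
  assert (HfcR := cont_on_Icc_comp_opp f lo hi Hfc).
  assert (HpiR : forall th e, inI (- hi) (- lo) th -> inI 0 ebar e ->
            pi_diag (reflect_types pit) th e = pi0 e - th * (- a * e + - b)).
  { intros th e Hth He. change (pi_diag pit (- th) e = pi0 e - th * (- a * e + - b)).
    rewrite Hpi by (apply Hopp, Hth || exact He). ring. }
  apply dominant_of_reflect_types.
  - intros d Hd. apply in_D_reflect_types in Hd. split.
    + apply (ex_RInt_pi_d_mul (- hi) (- lo) ebar _ pi0 (- a) (- b)); try assumption; lra.
    + apply (ex_RInt_gamma_d_mul (- hi) (- lo) ebar _ pi0 (- a) (- b)); try assumption; lra.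
  - apply (full_disclosure_dominant (- hi) (- lo) ebar _ _ pi0 (- a) (- b) (- thT));
      try assumption; try lra.
    + apply inI_opp. exact HthT.
    + intros th Hth. apply Hlow. lra.
    + intros x y Hx Hxy Hy. apply Hfm; lra.
    + apply full_disclosure_reflect_types, HdF.
Qed.

Theorem proposition6 (lo hi ebar : R) (pit : R -> R -> R -> R) (f : R -> R)
  (pi0 : R -> R) (a b thT : R) :
  lo < hi -> 0 < ebar ->
  standing_assumptions lo hi ebar pit ->
  density lo hi f ->
  (forall th, lo < th < hi -> ex_derive f th /\ continuous (Derive f) th) ->
  (forall th e, inI lo hi th -> inI 0 ebar e ->
     pi_diag pit th e = pi0 e - th * (a * e + b)) ->
  inI lo hi thT ->
  ((0 < a /\
    (forall th, lo <= th <= thT -> is_elow ebar pit th ebar) /\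
    (forall x y, thT <= x -> x <= y -> y <= hi -> f y <= f x))
   \/
   (a < 0 /\
    (forall th, thT <= th <= hi -> is_elow ebar pit th ebar) /\
    (forall x y, lo <= x -> x <= y -> y <= thT -> f x <= f y))) ->
  forall dF, full_disclosure lo hi ebar pit dF ->
    pareto_efficient lo hi ebar pit f dF /\
    (forall d, pareto_efficient lo hi ebar pit f d ->
       Gamma lo hi ebar pit f d = Gamma lo hi ebar pit f dF /\
       Pi lo hi ebar pit f d = Pi lo hi ebar pit f dF).
Proof.
  (* Continuity of [f] suffices. *)
  intros Hlh Hebar Hsa [Hf0 [Hfc _]] _ Hpi HthT Hcase dF HdF.
  pose proof (standing_assumptions_cont_on_Icc lo hi ebar pit Hsa) as Hcont.
  apply pareto_efficient_of_dominant.
  destruct Hcase as [[Ha [Hlow Hfm]]|[Ha [Hlow Hfm]]].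
  - apply (full_disclosure_dominant lo hi ebar pit f pi0 a b thT); assumption || lra.
  - apply (full_disclosure_dominant_neg lo hi ebar pit f pi0 a b thT); assumption || lra.
Qed.
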